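(* Let $\mathcal{W}$ be a weakly exact structure on an additive category $\mathcal{A}$ and let \[\begin{array}{ccc} A & \xrightarrow{i} & B\\ {\scriptstyle f}\downarrow & & \downarrow{\scriptstyle f'}\\ A' & \xrightarrow{i'} & B'\end{array}\] be a commutative square in which $i$ and $i'$ are admissible monics of $\mathcal{W}$. Then the following are equivalent: (i) the square is a pushout; (ii) the sequence $A\xrightarrow{\left[\begin{smallmatrix} i\\ -f\end{smallmatrix}\right]} B\oplus A'\xrightarrow{[f'\ \ i']} B'$ is a short exact sequence belonging to $\mathcal{W}$; (iii) the square is both a pushout and a pullback; (iv) there is a commutative diagram whose rows $A\xrightarrow{i}B\xrightarrow{p}C$ and $A'\xrightarrow{i'}B'\xrightarrow{p'}C$ belong to $\mathcal{W}$ and whose vertical maps are $f$, $f'$ and $1_C$. The dual statement (for admissible epics and pullbacks) also holds.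
   Context: Let $\mathcal{A}$ be an additive category. A kernel-cokernel pair (short exact sequence) is a pair of composable morphisms $A\xrightarrow{i}B\xrightarrow{d}C$ with $i$ a kernel of $d$ and $d$ a cokernel of $i$. A weakly exact structure on $\mathcal{A}$ is a class $\mathcal{W}$ of kernel-cokernel pairs, closed under isomorphisms of sequences and under finite direct sums of sequences, such that, calling $i$ an admissible monic (resp. $d$ an admissible epic) if $(i,d)\in\mathcal{W}$ for some $d$ (resp. some $i$): (E0) $1_A$ is an admissible monic for every object $A$; (E0)$^{op}$ $1_A$ is an admissible epic for every object $A$; (E2) for every admissible monic $i:A\to B$ and every morphism $t:A\to C$ the pushout of $i$ along $t$ exists and the resulting morphism $C\to S$ is an admissible monic; (E2)$^{op}$ for every admissible epic $h:A\to C$ and every morphism $t:B\to C$ the pullback of $h$ along $t$ exists and the resulting morphism $P\to B$ is an admissible epic. *)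

From HB Require Import structures.
From mathcomp Require Import all_boot all_algebra.
Set Implicit Arguments. Unset Strict Implicit. Unset Printing Implicit Defensive.
Import GRing.Theory.
Local Open Scope ring_scope.

(* An additive category: mor-sets are abelian groups, composition is
   bilinear, there is a zero object and (chosen) binary biproducts.
   [mcomp g f] is "g after f". *)
Record addCat := AddCat {
  obj :> Type;
  mor : obj -> obj -> zmodType;
  mcomp : forall a b c : obj, mor b c -> mor a b -> mor a c;
  idm : forall a : obj, mor a a;
  compA : forall (a b c d : obj) (h : mor c d) (g : mor b c) (f : mor a b),
      mcomp h (mcomp g f) = mcomp (mcomp h g) f;
  comp1m : forall (a b : obj) (f : mor a b), mcomp (idm b) f = f;
  compm1 : forall (a b : obj) (f : mor a b), mcomp f (idm a) = f;
  compDl : forall (a b c : obj) (g1 g2 : mor b c) (f : mor a b),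
      mcomp (g1 + g2) f = mcomp g1 f + mcomp g2 f;
  compDr : forall (a b c : obj) (g : mor b c) (f1 f2 : mor a b),
      mcomp g (f1 + f2) = mcomp g f1 + mcomp g f2;
  zobj : obj;
  zobj_id : idm zobj = 0;
  biprod : obj -> obj -> obj;
  bpin1 : forall a b : obj, mor a (biprod a b);
  bpin2 : forall a b : obj, mor b (biprod a b);
  bpr1 : forall a b : obj, mor (biprod a b) a;
  bpr2 : forall a b : obj, mor (biprod a b) b;
  bpr1_in1 : forall a b : obj, mcomp (bpr1 a b) (bpin1 a b) = idm a;
  bpr2_in2 : forall a b : obj, mcomp (bpr2 a b) (bpin2 a b) = idm b;
  bpr1_in2 : forall a b : obj, mcomp (bpr1 a b) (bpin2 a b) = 0;
  bpr2_in1 : forall a b : obj, mcomp (bpr2 a b) (bpin1 a b) = 0;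
  bpin_bpr : forall a b : obj,
      mcomp (bpin1 a b) (bpr1 a b) + mcomp (bpin2 a b) (bpr2 a b) = idm (biprod a b)
}.

Arguments mor {C} : rename.
Arguments mcomp {C a b c} : rename.
Arguments idm {C} : rename.
Arguments biprod {C} : rename.
Arguments bpin1 {C a b} : rename.
Arguments bpin2 {C a b} : rename.
Arguments bpr1 {C a b} : rename.
Arguments bpr2 {C a b} : rename.

Definition is_kernel {C : addCat} {a b c : C} (i : mor a b) (d : mor b c) : Prop :=
  mcomp d i = 0 /\
  forall (t : C) (x : mor t b), mcomp d x = 0 -> exists! y : mor t a, mcomp i y = x.

Definition is_cokernel {C : addCat} {a b c : C} (i : mor a b) (d : mor b c) : Prop :=
  mcomp d i = 0 /\
  forall (t : C) (x : mor b t), mcomp x i = 0 -> exists! y : mor c t, mcomp y d = x.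

Definition kc_pair {C : addCat} {a b c : C} (i : mor a b) (d : mor b c) : Prop :=
  is_kernel i d /\ is_cokernel i d.

Definition is_iso {C : addCat} {a b : C} (f : mor a b) : Prop :=
  exists g : mor b a, mcomp g f = idm a /\ mcomp f g = idm b.

(* A class of composable pairs (candidate short exact sequences). *)
Definition seqclass (C : addCat) := forall a b c : C, mor a b -> mor b c -> Prop.

Definition iso_seq {C : addCat} {a b c a' b' c' : C}
  (i : mor a b) (d : mor b c) (i' : mor a' b') (d' : mor b' c') : Prop :=
  exists (fa : mor a a') (fb : mor b b') (fc : mor c c'),
    [/\ is_iso fa, is_iso fb, is_iso fc,
        mcomp fb i = mcomp i' fa & mcomp fc d = mcomp d' fb].

Definition bimap {C : addCat} {a b a' b' : C} (f : mor a a') (g : mor b b')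
  : mor (biprod a b) (biprod a' b') :=
  mcomp bpin1 (mcomp f bpr1) + mcomp bpin2 (mcomp g bpr2).

Definition adm_monic {C : addCat} (W : seqclass C) {a b : C} (i : mor a b) : Prop :=
  exists (c : C) (d : mor b c), W a b c i d.

Definition adm_epic {C : addCat} (W : seqclass C) {b c : C} (d : mor b c) : Prop :=
  exists (a : C) (i : mor a b), W a b c i d.

(* The square  a -i-> b, a -t-> c, b -j-> s, c -s'-> s  is a pushout. *)
Definition is_pushout {C : addCat} {a b c s : C}
  (i : mor a b) (t : mor a c) (j : mor b s) (s' : mor c s) : Prop :=
  mcomp j i = mcomp s' t /\
  forall (x : C) (u : mor b x) (v : mor c x), mcomp u i = mcomp v t ->
    exists! w : mor s x, mcomp w j = u /\ mcomp w s' = v.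

(* The square  p -p1-> a -h-> c,  p -p2-> b -t-> c  is a pullback. *)
Definition is_pullback {C : addCat} {a b c p : C}
  (h : mor a c) (t : mor b c) (p1 : mor p a) (p2 : mor p b) : Prop :=
  mcomp h p1 = mcomp t p2 /\
  forall (x : C) (u : mor x a) (v : mor x b), mcomp h u = mcomp t v ->
    exists! w : mor x p, mcomp p1 w = u /\ mcomp p2 w = v.

Record weakly_exact {C : addCat} (W : seqclass C) : Prop := {
  we_kc : forall (a b c : C) (i : mor a b) (d : mor b c), W a b c i d -> kc_pair i d;
  we_iso : forall (a b c a' b' c' : C) (i : mor a b) (d : mor b c)
             (i' : mor a' b') (d' : mor b' c'),
      W a b c i d -> iso_seq i d i' d' -> W a' b' c' i' d';
  we_sum : forall (a1 b1 c1 a2 b2 c2 : C) (i1 : mor a1 b1) (d1 : mor b1 c1)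
             (i2 : mor a2 b2) (d2 : mor b2 c2),
      W a1 b1 c1 i1 d1 -> W a2 b2 c2 i2 d2 -> W _ _ _ (bimap i1 i2) (bimap d1 d2);
  we_E0 : forall a : C, adm_monic W (idm a);
  we_E0op : forall a : C, adm_epic W (idm a);
  we_E2 : forall (a b c : C) (i : mor a b) (t : mor a c), adm_monic W i ->
      exists (s : C) (j : mor b s) (s' : mor c s), is_pushout i t j s' /\ adm_monic W s';
  we_E2op : forall (a b c : C) (h : mor a c) (t : mor b c), adm_epic W h ->
      exists (p : C) (p1 : mor p a) (p2 : mor p b), is_pullback h t p1 p2 /\ adm_epic W p2
}.

(* Sequences of W are called conflations, their first
   maps inflations and their second maps deflations.
   - (i) => (iv): the pushout property makes d' f' a cokernel of i, and W is
     closed under replacing a cokernel by an isomorphic one.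
   - (iv) => (ii): B (+) A' with projections bpr1 and [f' i'] is a pullback of
     p = p' f' along p', so by (E2)^op and uniqueness of pullbacks [f' i'] is an
     admissible epic; [i; -f] is a kernel of it, hence the sequence lies in W.
   - (ii) => (i): a cokernel of [i; -f] is exactly the pushout property.
   - (iv) => pullback: i is a kernel of p and i' is monic.
   The dual statement is the same result in the opposite category, where the
   axioms of a weakly exact structure are self-dual. *)

From Pilot Require Import Defs.
From mathcomp Require Import all_boot all_algebra.
Set Implicit Arguments. Unset Strict Implicit. Unset Printing Implicit Defensive.
Import GRing.Theory.
Local Open Scope ring_scope.

Section AdditiveCategory.
Variable C : addCat.

Lemma comp0l (a b c : C) (f : mor a b) : mcomp (0 : mor b c) f = 0.
Proof.
have h := compDl (0 : mor b c) 0 f; rewrite addr0 in h.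
by apply: (addrI (mcomp (0 : mor b c) f)); rewrite -h addr0.
Qed.

Lemma comp0r (a b c : C) (g : mor b c) : mcomp g (0 : mor a b) = 0.
Proof.
have h := compDr g (0 : mor a b) 0; rewrite addr0 in h.
by apply: (addrI (mcomp g (0 : mor a b))); rewrite -h addr0.
Qed.

Lemma compNl (a b c : C) (g : mor b c) (f : mor a b) : mcomp (- g) f = - mcomp g f.
Proof.
have h := compDl (- g) g f; rewrite addNr comp0l in h.
by apply: (addIr (mcomp g f)); rewrite -h addNr.
Qed.

Lemma compNr (a b c : C) (g : mor b c) (f : mor a b) : mcomp g (- f) = - mcomp g f.
Proof.
have h := compDr g (- f) f; rewrite addNr comp0r in h.
by apply: (addIr (mcomp g f)); rewrite -h addNr.
Qed.

Lemma compBr (a b c : C) (g : mor b c) (f1 f2 : mor a b) :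
  mcomp g (f1 - f2) = mcomp g f1 - mcomp g f2.
Proof. by rewrite compDr compNr. Qed.

Lemma iso_idm (a : C) : is_iso (idm a).
Proof. by exists (idm a); rewrite comp1m. Qed.

Definition bprow (a b x : C) (u : mor a x) (v : mor b x) : mor (biprod a b) x :=
  mcomp u bpr1 + mcomp v bpr2.

Definition bpcol (t a b : C) (y : mor t a) (z : mor t b) : mor t (biprod a b) :=
  mcomp bpin1 y + mcomp bpin2 z.

Lemma bp_ext (t a b : C) (u v : mor t (biprod a b)) :
  mcomp bpr1 u = mcomp bpr1 v -> mcomp bpr2 u = mcomp bpr2 v -> u = v.
Proof.
move=> H1 H2.
by rewrite -(comp1m u) -(comp1m v) -bpin_bpr !compDl -!Defs.compA H1 H2.
Qed.

Lemma bprow_in1 (a b x : C) (u : mor a x) (v : mor b x) : mcomp (bprow u v) bpin1 = u.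
Proof. by rewrite compDl -!Defs.compA bpr1_in1 bpr2_in1 compm1 comp0r addr0. Qed.

Lemma bprow_in2 (a b x : C) (u : mor a x) (v : mor b x) : mcomp (bprow u v) bpin2 = v.
Proof. by rewrite compDl -!Defs.compA bpr1_in2 bpr2_in2 compm1 comp0r add0r. Qed.

Lemma bpr1_col (t a b : C) (y : mor t a) (z : mor t b) : mcomp bpr1 (bpcol y z) = y.
Proof. by rewrite compDr !Defs.compA bpr1_in1 bpr1_in2 comp1m comp0l addr0. Qed.

Lemma bpr2_col (t a b : C) (y : mor t a) (z : mor t b) : mcomp bpr2 (bpcol y z) = z.
Proof. by rewrite compDr !Defs.compA bpr2_in1 bpr2_in2 comp1m comp0l add0r. Qed.

Lemma bprow_comp (t a b x : C) (u : mor a x) (v : mor b x) (w : mor t (biprod a b)) :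
  mcomp (bprow u v) w = mcomp u (mcomp bpr1 w) + mcomp v (mcomp bpr2 w).
Proof. by rewrite compDl -!Defs.compA. Qed.

Lemma bprow_col (t a b x : C) (u : mor a x) (v : mor b x) (y : mor t a) (z : mor t b) :
  mcomp (bprow u v) (bpcol y z) = mcomp u y + mcomp v z.
Proof. by rewrite bprow_comp bpr1_col bpr2_col. Qed.

Lemma comp_bprow (a b x y : C) (w : mor x y) (u : mor a x) (v : mor b x) :
  mcomp w (bprow u v) = bprow (mcomp w u) (mcomp w v).
Proof. by rewrite compDr !Defs.compA. Qed.

Lemma kernel_mono (a b c : C) (i : mor a b) (d : mor b c) :
  is_kernel i d -> forall (t : C) (y1 y2 : mor t a), mcomp i y1 = mcomp i y2 -> y1 = y2.
Proof.
move=> [Hdi Hk] t y1 y2 H.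
have /Hk [y [_ Hu]] : mcomp d (mcomp i y1) = 0 by rewrite Defs.compA Hdi comp0l.
by rewrite -(Hu y1 erefl) (Hu y2 (esym H)).
Qed.

Lemma coker_epi (a b c : C) (i : mor a b) (d : mor b c) :
  is_cokernel i d -> forall (t : C) (y1 y2 : mor c t), mcomp y1 d = mcomp y2 d -> y1 = y2.
Proof.
move=> [Hdi Hk] t y1 y2 H.
have /Hk [y [_ Hu]] : mcomp (mcomp y1 d) i = 0 by rewrite -Defs.compA Hdi comp0r.
by rewrite -(Hu y1 erefl) (Hu y2 (esym H)).
Qed.

Lemma pullback_unique (a b c p q : C) (h : mor a c) (t : mor b c)
  (p1 : mor p a) (p2 : mor p b) (q1 : mor q a) (q2 : mor q b) :
  is_pullback h t p1 p2 -> is_pullback h t q1 q2 ->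
  exists phi : mor p q, [/\ is_iso phi, mcomp q1 phi = p1 & mcomp q2 phi = p2].
Proof.
move=> [Hp Up] [Hq Uq].
have [phi [[E1 E2] _]] := Uq p p1 p2 Hp.
have [psi [[F1 F2] _]] := Up q q1 q2 Hq.
exists phi; split=> //; exists psi; split.
- have [z [_ Uz]] := Up p p1 p2 Hp.
  transitivity z; [symmetry; apply: Uz | apply: Uz]; split;
    by rewrite ?compm1 // Defs.compA ?F1 ?F2 ?E1 ?E2.
- have [z [_ Uz]] := Uq q q1 q2 Hq.
  transitivity z; [symmetry; apply: Uz | apply: Uz]; split;
    by rewrite ?compm1 // Defs.compA ?F1 ?F2 ?E1 ?E2.
Qed.

End AdditiveCategory.

Section CommutativeSquare.
Variables (C : addCat) (A B A' B' : C).
Variables (i : mor A B) (f : mor A A') (f' : mor B B') (i' : mor A' B').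
Hypothesis Hsq : mcomp f' i = mcomp i' f.

Lemma pushout_cokernel (Q : C) (d' : mor B' Q) :
  is_pushout i f f' i' -> is_cokernel i' d' -> is_cokernel i (mcomp d' f').
Proof.
move=> [_ Hpo] [Hd'i' Hcok']; split.
  by rewrite -Defs.compA Hsq Defs.compA Hd'i' comp0l.
move=> t x Hx.
have /Hpo [w [[Hw1 Hw2] Hwu]] : mcomp x i = mcomp (0 : mor A' t) f by rewrite Hx comp0l.
have [y [Hy Hyu]] := Hcok' t w Hw2.
exists y; split; first by rewrite Defs.compA Hy Hw1.
move=> y' Hy'; apply: Hyu; symmetry; apply: Hwu; split.
- by rewrite -Defs.compA.
- by rewrite -Defs.compA Hd'i' comp0r.
Qed.

Lemma cokernel_pushout :
  is_cokernel (bpcol i (- f)) (bprow f' i') -> is_pushout i f f' i'.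
Proof.
move=> [_ Hcok]; split=> // x u v Huv.
have /Hcok [w [Hw Hwu]] : mcomp (bprow u v) (bpcol i (- f)) = 0.
  by rewrite bprow_col compNr Huv subrr.
exists w; split.
  by split; [rewrite -(bprow_in1 f' i') | rewrite -(bprow_in2 f' i')];
    rewrite Defs.compA Hw ?bprow_in1 ?bprow_in2.
by move=> w' [H1 H2]; apply: Hwu; rewrite comp_bprow H1 H2.
Qed.

Section OverCommonCokernel.
Variables (Q : C) (p : mor B Q) (p' : mor B' Q).
Hypotheses (Kip : is_kernel i p) (Ki'p' : is_kernel i' p') (Hpp : p = mcomp p' f').

Lemma biprod_kernel : is_kernel (bpcol i (- f)) (bprow f' i').
Proof.
case: (Kip) => _ Hkp; split; first by rewrite bprow_col compNr Hsq subrr.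
move=> t x Hx; rewrite bprow_comp in Hx.
have Hf'x : mcomp f' (mcomp bpr1 x) = - mcomp i' (mcomp bpr2 x).
  by apply/eqP; rewrite -addr_eq0 Hx.
have /Hkp [y [Hy Hyu]] : mcomp p (mcomp bpr1 x) = 0.
  by rewrite Hpp -Defs.compA Hf'x compNr Defs.compA Ki'p'.1 comp0l oppr0.
exists y; split; last by move=> y' Hy'; apply: Hyu; rewrite -Hy' Defs.compA bpr1_col.
apply: bp_ext; rewrite !Defs.compA ?bpr1_col ?bpr2_col //.
apply: (kernel_mono Ki'p'); apply: oppr_inj.
by rewrite -Hf'x -Hy compNl compNr opprK !Defs.compA Hsq.
Qed.

Lemma kernels_pullback : is_pullback f' i' i f.
Proof.
case: (Kip) => [Hpi Hkp]; split=> // X u v Huv.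
have /Hkp [z [Hz Hzu]] : mcomp p u = 0.
  by rewrite Hpp -Defs.compA Huv Defs.compA Ki'p'.1 comp0l.
exists z; split; last by move=> z' [H1 _]; apply: Hzu.
split=> //; apply: (kernel_mono Ki'p').
by rewrite Defs.compA -Hsq -Defs.compA Hz.
Qed.

End OverCommonCokernel.
End CommutativeSquare.

Lemma biprod_pullback (C : addCat) (B A' B' Q : C) (f' : mor B B') (i' : mor A' B')
    (p' : mor B' Q) :
  is_kernel i' p' -> is_pullback (mcomp p' f') p' bpr1 (bprow f' i').
Proof.
move=> [Hp'i' Hkp']; split.
  by rewrite comp_bprow -Defs.compA Hp'i' /bprow comp0l addr0 Defs.compA.
move=> X u v Huv.
have /Hkp' [z [Hz Hzu]] : mcomp p' (v - mcomp f' u) = 0.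
  by rewrite compBr Defs.compA -Huv subrr.
exists (bpcol u z); split.
  by rewrite bpr1_col bprow_col Hz addrC subrK.
move=> w [Hw1 Hw2]; apply: bp_ext; first by rewrite bpr1_col Hw1.
by rewrite bpr2_col; apply: Hzu; rewrite -Hw2 bprow_comp Hw1 addrC addKr.
Qed.

Section WeaklyExactStructure.
Variable C : addCat.
Variable W : seqclass C.
Arguments W : clear implicits.
Hypothesis HW : weakly_exact W.

(* Closure under isomorphism: the kernel of a conflation may be replaced by any
   other kernel of its deflation ... *)
Lemma conflation_kernel_replace (a a' b c : C) (i : mor a b) (j : mor a' b) (d : mor b c) :
  W a b c i d -> is_kernel j d -> W a' b c j d.
Proof.
move=> Wid Kj; have [Ki _] := we_kc HW Wid.
have [al [Hal _]] := Ki.2 a' j Kj.1.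
have [be [Hbe _]] := Kj.2 a i Ki.1.
apply: (we_iso HW Wid); exists be, (idm b), (idm c); split; try exact: iso_idm.
- exists al; split.
  + by apply: (kernel_mono Ki); rewrite Defs.compA Hal Hbe compm1.
  + by apply: (kernel_mono Kj); rewrite Defs.compA Hbe Hal compm1.
- by rewrite comp1m Hbe.
- by rewrite comp1m compm1.
Qed.

(* ... and its deflation by any other cokernel of its inflation. *)
Lemma conflation_cokernel_replace (a b c c' : C) (i : mor a b) (d : mor b c) (e : mor b c') :
  W a b c i d -> is_cokernel i e -> W a b c' i e.
Proof.
move=> Wid Ce; have [_ Cd] := we_kc HW Wid.
have [al [Hal _]] := Cd.2 c' e Ce.1.
have [be [Hbe _]] := Ce.2 c d Cd.1.
apply: (we_iso HW Wid); exists (idm a), (idm b), al; split; try exact: iso_idm.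
- exists be; split.
  + by apply: (coker_epi Cd); rewrite -Defs.compA Hal Hbe comp1m.
  + by apply: (coker_epi Ce); rewrite -Defs.compA Hbe Hal comp1m.
- by rewrite comp1m compm1.
- by rewrite Hal compm1.
Qed.

Lemma conflation_transport (a p p' c : C) (k : mor a p) (q : mor p c) (g : mor p' c)
    (phi : mor p p') :
  W _ _ _ k q -> is_iso phi -> mcomp g phi = q -> W _ _ _ (mcomp phi k) g.
Proof.
move=> Wkq Hphi E; apply: (we_iso HW Wkq); exists (idm a), phi, (idm c).
by split; rewrite ?compm1 ?comp1m //; exact: iso_idm.
Qed.

Section AdmissibleMonicSquare.
Variables (A B A' B' : C).
Variables (i : mor A B) (f : mor A A') (f' : mor B B') (i' : mor A' B').
Hypothesis Hsq : mcomp f' i = mcomp i' f.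

Lemma pushout_conflations (Q Q0 : C) (d : mor B Q0) (d' : mor B' Q) :
  is_pushout i f f' i' -> W _ _ _ i d -> W _ _ _ i' d' -> W _ _ _ i (mcomp d' f').
Proof.
move=> Hpo Wid Wi'd'; apply: (conflation_cokernel_replace Wid).
exact: (pushout_cokernel Hsq Hpo (we_kc HW Wi'd').2).
Qed.

(* (iv) => (ii): the biproduct sequence is isomorphic to a pullback of the
   deflation p' along p, which is a conflation by (E2)^op. *)
Lemma conflations_biprod (Q : C) (p : mor B Q) (p' : mor B' Q) :
  W _ _ _ i p -> W _ _ _ i' p' -> p = mcomp p' f' ->
  W _ _ _ (bpcol i (- f)) (bprow f' i').
Proof.
move=> Wip Wi'p' Hpp.
have Kip := (we_kc HW Wip).1; have Ki'p' := (we_kc HW Wi'p').1.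
have Hpb : is_pullback p p' bpr1 (bprow f' i') by rewrite Hpp; exact: biprod_pullback.
have [P [q1 [q2 [Hpb' [K [k Wkq2]]]]]] := we_E2op HW p' (ex_intro _ A (ex_intro _ i Wip)).
have [phi [Hphi _ Ephi]] := pullback_unique Hpb' Hpb.
apply: (conflation_kernel_replace (conflation_transport Wkq2 Hphi Ephi)).
exact (biprod_kernel Hsq Kip Ki'p' Hpp).
Qed.

End AdmissibleMonicSquare.
End WeaklyExactStructure.

Lemma bpcol_opp (C : addCat) (t a b : C) (y : mor t a) (z : mor t b) :
  bpcol y (- z) = mcomp bpin1 y - mcomp bpin2 z.
Proof. by rewrite /bpcol compNr. Qed.

Lemma pushout_admissible_monics (C : addCat) (W : seqclass C) (HW : weakly_exact W)
    (A B A' B' : C) (i : mor A B) (f : mor A A') (f' : mor B B') (i' : mor A' B') :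
  mcomp f' i = mcomp i' f -> adm_monic W i -> adm_monic W i' ->
  let P1 := is_pushout i f f' i' in
  let P2 := W _ _ _ (mcomp bpin1 i - mcomp bpin2 f : mor A (biprod B A'))
                    (mcomp f' bpr1 + mcomp i' bpr2) in
  let P3 := is_pushout i f f' i' /\ is_pullback f' i' i f in
  let P4 := exists (Q : C) (p : mor B Q) (p' : mor B' Q),
              [/\ W _ _ _ i p, W _ _ _ i' p' & mcomp (idm Q) p = mcomp p' f'] in
  [/\ P1 <-> P2, P1 <-> P3 & P1 <-> P4].
Proof.
move=> Hsq [Q0 [d Wid]] [Q [d' Wi'd']] P1 P2 P3 P4.
have P1P4 : P1 -> P4.
  move=> Hpo; exists Q, (mcomp d' f'), d'.
  by split=> //; [exact: pushout_conflations Hpo Wid Wi'd' | rewrite comp1m].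
have P4P2 : P4 -> P2.
  move=> [Q1 [p [p' [Wip Wi'p']]]]; rewrite comp1m /P2 -bpcol_opp.
  exact: conflations_biprod.
have P2P1 : P2 -> P1.
  by rewrite /P2 -bpcol_opp => /(we_kc HW) [_]; exact: cokernel_pushout.
have P4P3 : P4 -> is_pullback f' i' i f.
  move=> [Q1 [p [p' [Wip Wi'p']]]]; rewrite comp1m.
  exact (kernels_pullback Hsq (we_kc HW Wip).1 (we_kc HW Wi'p').1).
split; split=> [HP1|].
- exact: P4P2 (P1P4 HP1).
- exact: P2P1.
- exact: (conj HP1 (P4P3 (P1P4 HP1))).
- by case.
- exact: P1P4 HP1.
- by move/P4P2/P2P1.
Qed.

Definition opCat (C : addCat) : addCat := {|
  obj := obj C;
  mor := fun a b => @mor C b a;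
  mcomp := fun a b c g f => mcomp f g;
  idm := @idm C;
  Defs.compA := fun a b c d h g f => esym (Defs.compA f g h);
  comp1m := fun a b f => compm1 f;
  compm1 := fun a b f => comp1m f;
  compDl := fun a b c g1 g2 f => compDr f g1 g2;
  compDr := fun a b c g f1 f2 => compDl f1 f2 g;
  zobj := zobj C;
  zobj_id := zobj_id C;
  biprod := @biprod C;
  bpin1 := fun a b => @bpr1 C a b;
  bpin2 := fun a b => @bpr2 C a b;
  bpr1 := fun a b => @bpin1 C a b;
  bpr2 := fun a b => @bpin2 C a b;
  bpr1_in1 := @bpr1_in1 C;
  bpr2_in2 := @bpr2_in2 C;
  bpr1_in2 := @bpr2_in1 C;
  bpr2_in1 := @bpr1_in2 C;
  bpin_bpr := @bpin_bpr C
|}.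

Definition Wop (C : addCat) (W : seqclass C) : seqclass (opCat C) :=
  fun a b c i d => W c b a d i.

Lemma iso_square_inv (C : addCat) (x y x' y' : C) (d : mor x y) (d' : mor x' y')
    (fc : mor x' x) (gc : mor x x') (fb : mor y' y) (gb : mor y y') :
  mcomp fc gc = idm x -> mcomp gb fb = idm y' -> mcomp d fc = mcomp fb d' ->
  mcomp gb d = mcomp d' gc.
Proof.
move=> H1 H2 E.
rewrite -[mcomp gb d]compm1 -H1 Defs.compA -(Defs.compA gb d fc) E.
by rewrite (Defs.compA gb fb d') H2 comp1m.
Qed.

Lemma bimap_op (C : addCat) (a b a' b' : C) (x : mor a' a) (y : mor b' b) :
  @bimap (opCat C) a b a' b' x y = @bimap C a' b' a b x y.
Proof. by rewrite /bimap /= !Defs.compA. Qed.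

Lemma weakly_exact_op (C : addCat) (W : seqclass C) :
  weakly_exact W -> weakly_exact (Wop W).
Proof.
move=> HW; split.
- by move=> a b c i d /(we_kc HW) [Hk Hc]; split.
- move=> a b c a' b' c' i d i' d' Wdi
    [fa [fb [fc [[ga [Ha1 Ha2]] [gb [Hb1 Hb2]] [gc [Hc1 Hc2]] E1 E2]]]].
  apply: (we_iso HW Wdi); exists gc, gb, ga; split.
  + by exists fc; split.
  + by exists fb; split.
  + by exists fa; split.
  + exact: (@iso_square_inv C _ _ _ _ d d' fc gc fb gb Hc1 Hb2 E2).
  + exact: (@iso_square_inv C _ _ _ _ i i' fb gb fa ga Hb1 Ha2 E1).
- move=> a1 b1 c1 a2 b2 c2 i1 d1 i2 d2 W1 W2.
  by rewrite /Wop !bimap_op; exact: (we_sum HW W1 W2).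
- exact: (we_E0op HW).
- exact: (we_E0 HW).
- by move=> a b c i t /(@we_E2op C W HW b c a i t).
- by move=> a b c h t /(@we_E2 C W HW c a b h t).
Qed.

Theorem mainTheorem1 (C : addCat) (W : seqclass C) (HW : weakly_exact W) :
  (forall (A B A' B' : C) (i : mor A B) (f : mor A A') (f' : mor B B') (i' : mor A' B'),
     mcomp f' i = mcomp i' f -> adm_monic W i -> adm_monic W i' ->
     let P1 := is_pushout i f f' i' in
     let P2 := W _ _ _ (mcomp bpin1 i - mcomp bpin2 f : mor A (biprod B A'))
                       (mcomp f' bpr1 + mcomp i' bpr2) in
     let P3 := is_pushout i f f' i' /\ is_pullback f' i' i f in
     let P4 := exists (Q : C) (p : mor B Q) (p' : mor B' Q),
                 [/\ W _ _ _ i p, W _ _ _ i' p' & mcomp (idm Q) p = mcomp p' f'] in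
     [/\ P1 <-> P2, P1 <-> P3 & P1 <-> P4])
  /\
  (forall (A B A' B' : C) (i : mor B A) (f : mor A' A) (f' : mor B' B) (i' : mor B' A'),
     mcomp i f' = mcomp f i' -> adm_epic W i -> adm_epic W i' ->
     let P1 := is_pullback i f f' i' in
     let P2 := W _ _ _ (mcomp bpin1 f' + mcomp bpin2 i' : mor B' (biprod B A'))
                       (mcomp i bpr1 - mcomp f bpr2) in
     let P3 := is_pullback i f f' i' /\ is_pushout f' i' i f in
     let P4 := exists (K : C) (k : mor K B) (k' : mor K B'),
                 [/\ W _ _ _ k i, W _ _ _ k' i' & mcomp f' k' = mcomp k (idm K)] in
     [/\ P1 <-> P2, P1 <-> P3 & P1 <-> P4]).
Proof.
split=> [|A B A' B' i f f' i' Hsq Hi Hi'].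
  by move=> *; apply: pushout_admissible_monics.
(* The epic statement is the monic one in the opposite category. *)
have [H12 H13 [H14 H41]] :=
  @pushout_admissible_monics (opCat C) _ (weakly_exact_op HW) A B A' B' i f f' i' Hsq Hi Hi'.
split=> //; split.
- by move=> /H14 [K [k [k' [Wk Wk' E]]]]; exists K, k, k'.
- by move=> [K [k [k' [Wk Wk' E]]]]; apply: H41; exists K, k, k'.
Qed.
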